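(* Let $\mathcal{A}$ be a separating union-closed family with base set $[n]$ and height $h$, and suppose $h = 4 \leq n$ and $0 \leq |\mathcal{B}(\mathcal{A})| \leq 2$. Then there exists an element of $[n]$ that is contained in at least $\frac{|\mathcal{A}|}{2}$ member sets of $\mathcal{A}$.
   Context: A family of sets $\mathcal{A}$ is union-closed if it is a finite family of distinct finite sets with at least one nonempty member set, and $X,Y\in\mathcal{A}$ implies $X\cup Y\in\mathcal{A}$ (the empty set may be a member). For a family $\mathcal{F}$, $b(\mathcal{F})=\bigcup_{F\in\mathcal{F}}F$; the base set $b(\mathcal{A})$ is denoted $[n]=\{1,\dots,n\}$. $\mathcal{A}$ is separating if for any two distinct $x,y\in[n]$ there is $A\in\mathcal{A}$ containing exactly one of $x,y$. A chain in $\mathcal{A}$ is a subfamily any two distinct members of which are comparable under proper inclusion; the height $h$ of $\mathcal{A}$ is the maximum size of a chain in $\mathcal{A}$. For real $x\ge 0$, $\mathcal{A}_{<x}=\{A\in\mathcal{A} : |A|<x\}$. For $\mathcal{S}\subseteq\mathcal{A}$ and $S\in\mathcal{S}$, $\mathrm{irr}_{\mathcal{S}}(S)=\{s\in S : s\notin b(\mathcal{S}\setminus\{S\})\}$, and $\mathcal{S}$ is irredundant if $\mathrm{irr}_{\mathcal{S}}(S)\neq\emptyset$ for every $S\in\mathcal{S}$. Set $B=b(\mathcal{A}_{<n/2})$, and let $\mathcal{B}=\mathcal{B}(\mathcal{A})$ denote any irredundant subfamily of $\mathcal{A}_{<n/2}$ of minimum size such that $b(\mathcal{B})=B$. *)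

(* A family of sets over base set [n] is modelled as
   F : {set {set 'I_n}}, the elements of [n] being the ordinals 0..n-1. *)
From mathcomp Require Import all_boot all_order.
Set Implicit Arguments. Unset Strict Implicit. Unset Printing Implicit Defensive.

Section Defs.
Variable n : nat.
Implicit Types (F S C : {set {set 'I_n}}) (X Y : {set 'I_n}).

Definition bset F : {set 'I_n} := \bigcup_(X in F) X.

Definition union_closed F : Prop :=
  (exists2 X, X \in F & X != set0) /\
  (forall X Y, X \in F -> Y \in F -> X :|: Y \in F).

Definition base_is_n F : Prop := bset F = [set: 'I_n].

Definition separating F : Prop :=
  forall x y : 'I_n, x != y -> exists2 X, X \in F & (x \in X) != (y \in X).

Definition is_chain C : bool :=
  [forall X in C, forall Y in C, (X \subset Y) || (Y \subset X)].

Definition height F : nat :=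
  \max_(C in powerset F | is_chain C) #|C|.

Definition small F : {set {set 'I_n}} := [set X in F | 2 * #|X| < n].

Definition irr S X : {set 'I_n} := X :\: bset (S :\ X).

Definition irredundant S : bool := [forall X in S, irr S X != set0].

(* S is a valid choice of B(F): an irredundant subfamily of F_{<n/2} whose
   union is B = b(F_{<n/2}), of minimum size among all such subfamilies *)
Definition is_calB F S : Prop :=
  [/\ S \subset small F, irredundant S, bset S = bset (small F) &
      forall S', S' \subset small F -> irredundant S' ->
                 bset S' = bset (small F) -> #|S| <= #|S'| ].
End Defs.

(* Write e(X) = 2|X| - n, and [excess F] for its sum over F.  Double counting shows
   that some element lies in at least half of the members of A as soon as [excess A] >= 0.
   Only the members of size < n/2 ("small" ones) have negative excess, while [n] (a member,
   as A is union-closed) contributes n.  Height 4 enters through a single mechanism: two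
   distinct members X1, X2 inside a member T must cover T, for otherwise X_i < X1 u X2 < T
   for some i, and this chain grows to five members as soon as X_i properly contains a
   member and T <> [n], or T lies strictly below a member other than [n].
   - If a small member Y contains a member X0, every member above Y misses at most one
     point, and separation yields at least n - 1 - |Y| co-singletons in A.  Their excess
     n - 2 pays for the proper subsets of Y (which pairwise cover Y) and for the small
     members not inside Y (each of which completes Y to a co-singleton).
   - Otherwise no small member contains another one, and a minimum cover B of the small
     members has at most two sets.  When B = {S1, S2} and U = S1 u S2 misses two points,
     the small members pairwise cover U, and U and [n] pay for them.  When U misses a single
     point, S1 and S2 are disjoint halves, and every other small member Z is charged to the
     member Z u S1 strictly between S1 and U; these members pairwise cover S2. *)

From mathcomp Require Import all_boot all_order all_algebra zify.
Set Implicit Arguments. Unset Strict Implicit. Unset Printing Implicit Defensive.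
Import Num.Theory.

Lemma double_count (I J : finType) (P : pred I) (Q : pred J) (R : I -> J -> bool) :
  \sum_(i | P i) #|[set j | Q j & R i j]| = \sum_(j | Q j) #|[set i | P i & R i j]|.
Proof.
under eq_bigr do rewrite -sum1_card.
under [RHS]eq_bigr do rewrite -sum1_card.
rewrite (exchange_big_dep Q) => [|i j _]; last by rewrite inE => /andP[].
by apply: eq_bigr => j Qj; apply: eq_bigl => i; rewrite !inE Qj.
Qed.

Lemma card_compl n (X : {set 'I_n}) : #|X| + #|~: X| = n.
Proof. by rewrite cardsC card_ord. Qed.

Lemma neq_properU (T : finType) (X1 X2 : {set T}) :
  X1 != X2 -> (X1 \proper X1 :|: X2) || (X2 \proper X1 :|: X2).
Proof.
move=> X12; rewrite !properEneq subsetUl subsetUr !andbT -negb_and.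
by apply: contra X12 => /andP[/eqP X1U /eqP X2U]; rewrite X1U {2}X2U.
Qed.

Lemma subset_setU_disjoint (T : finType) (X Y Z : {set T}) :
  X \subset Y :|: Z -> [disjoint X & Z] -> X \subset Y.
Proof. by move=> XYZ XZ; rewrite -(setIidPl XYZ) setIUr (disjoint_setI0 XZ) setU0 subsetIr. Qed.

Lemma cosingleton_eq (T : finType) (W : {set T}) x :
  #|~: W| <= 1 -> x \notin W -> W = ~: [set x].
Proof.
move=> /card_le1_eqP W_cosmall xW; apply/setP => z; rewrite !inE.
have [zW|zW] := boolP (z \in W); last by rewrite (W_cosmall z x) ?eqxx ?inE.
by apply/esym/negP => /eqP zx; rewrite -zx zW in xW.
Qed.

Section Excess.
Variable n : nat.
Implicit Types (F G B : {set {set 'I_n}}) (X T : {set 'I_n}).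

Definition excess F : int := ((2 * \sum_(X in F) #|X|)%:Z - (n * #|F|)%:Z)%R.

Lemma excess_setID F B : excess F = (excess (F :&: B) + excess (F :\: B))%R.
Proof. rewrite /excess (big_setID B) -(cardsID B F) /=; lia. Qed.

Lemma small_mem F X : X \in small F -> X \in F.
Proof. by rewrite inE => /andP[]. Qed.

Lemma excess_small F : excess F = (excess (small F) + excess (F :\: small F))%R.
Proof.
by rewrite (excess_setID F (small F)) (setIidPr _) //; apply/subsetP => X /small_mem.
Qed.

Lemma setT_nonsmall F : setT \in F -> setT \in F :\: small F.
Proof. by move=> TF; rewrite !inE TF cardsT card_ord andbT -leqNgt leq_pmull. Qed.

Lemma excess_setD1 F X : X \in F -> excess F = ((2 * #|X|)%:Z - n%:Z + excess (F :\ X))%R.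
Proof.
move=> XF; rewrite (excess_setID F [set X]) (setIidPr _) ?sub1set //.
by rewrite {1}/excess big_set1 cards1; lia.
Qed.

Lemma excess_lower F (f : {set 'I_n} -> nat) :
  (forall X, X \in F -> n <= 2 * #|X| + f X) ->
  (- (\sum_(X in F) f X)%:Z <= excess F)%R.
Proof.
move=> large.
suff: n * #|F| <= 2 * \sum_(X in F) #|X| + \sum_(X in F) f X by rewrite /excess; lia.
rewrite [n * _]mulnC -sum_nat_const big_distrr -big_split /=.
by apply: leq_sum => X XF; apply: large.
Qed.

Lemma excess_ge0 F : (forall X, X \in F -> n <= 2 * #|X|) -> (0 <= excess F)%R.
Proof.
move=> large; have := @excess_lower F (fun=> 0).
by rewrite big1 //; apply=> X /large; rewrite addn0.
Qed.

Lemma excess_nonsmall_ge0 F G : G \subset F :\: small F -> (0 <= excess G)%R.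
Proof.
move=> GF; apply: excess_ge0 => X /(subsetP GF); rewrite !inE => /andP[notsmall XF].
by move: notsmall; rewrite XF -leqNgt.
Qed.

Lemma excess_card_const F k : (forall X, X \in F -> #|X| = k) ->
  excess F = (#|F|%:Z * ((2 * k)%:Z - n%:Z))%R.
Proof.
move=> cardF; rewrite /excess (eq_bigr (fun=> k)) // sum_nat_const; lia.
Qed.

Lemma excess_sub F T : (forall X, X \in F -> X \subset T) ->
  (excess F + (2 * \sum_(X in F) #|T :\: X|)%:Z = #|F|%:Z * ((2 * #|T|)%:Z - n%:Z))%R.
Proof.
move=> subT.
have: \sum_(X in F) #|X| + \sum_(X in F) #|T :\: X| = #|F| * #|T|.
  rewrite -big_split -sum_nat_const; apply: eq_bigr => X XF.
  by rewrite -(cardsID X T) (setIidPr (subT X XF)) setDE.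
rewrite /excess; lia.
Qed.

Lemma missing_le_card (P : pred {set 'I_n}) T :
  (forall X1 X2, P X1 -> P X2 -> X1 != X2 -> T \subset X1 :|: X2) ->
  \sum_(X | P X) #|T :\: X| <= #|T|.
Proof.
move=> cover.
rewrite (eq_bigr (fun X => #|[set x | x \in T & x \notin X]|)) => [|X _]; last first.
  by apply: eq_card => x; rewrite !inE andbC.
rewrite (double_count P (mem T) (fun X x => x \notin X)) -sum1_card.
apply: leq_sum => x xT; apply/card_le1_eqP => X1 X2; rewrite !inE.
move=> /andP[X1F x1] /andP[X2F x2]; case: (eqVneq X1 X2) => // X12.
by have := subsetP (cover X1 X2 X1F X2F X12) x xT; rewrite inE (negbTE x1) (negbTE x2).
Qed.

Lemma card_le_missing F T : (forall X, X \in F -> ~~ (T \subset X)) ->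
  #|F| <= \sum_(X in F) #|T :\: X|.
Proof.
move=> notsup; rewrite -sum1_card; apply: leq_sum => X /notsup.
by rewrite -setD_eq0 card_gt0.
Qed.

Lemma excess_ge0_frequent F : 0 < n -> (0 <= excess F)%R ->
  exists x : 'I_n, #|F| <= 2 * #|[set X in F | x \in X]|.
Proof.
move=> n_gt0 excess_ge0.
case: (boolP [exists x, #|F| <= 2 * #|[set X in F | x \in X]|]) => [/existsP//|].
move=> /existsPn rare.
have: 2 * \sum_(X in F) #|X| <= n * #|F|.-1.
  rewrite (eq_bigr (fun X => #|[set x | predT x & x \in X]|)) => [|X _]; last first.
    by apply: eq_card => x; rewrite !inE.
  rewrite (double_count (mem F) predT (fun X x => x \in X)) big_distrr /=.
  rewrite -[n in n * _]card_ord -sum_nat_const; apply: leq_sum => x _.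
  by have := rare x; rewrite -ltnNge; case: #|F|.
have: 0 < #|F| by have := rare (Ordinal n_gt0); rewrite -ltnNge; case: #|F|.
move: excess_ge0; rewrite /excess; case: #|F| => // m; nia.
Qed.

End Excess.

Section Families.
Variables (n : nat) (A : {set {set 'I_n}}).
Implicit Types X T V : {set 'I_n}.

Lemma sorted_chain_le_height (s : seq {set 'I_n}) :
  all (mem A) s -> sorted (fun X Y : {set 'I_n} => X \proper Y) s -> size s <= height A.
Proof.
move=> sA s_sorted; pose C := [set X in s].
have s_uniq : uniq s.
  by apply: sorted_uniq s_sorted => [Y X Z|X]; [exact: proper_trans | exact: properxx].
have -> : size s = #|C| by rewrite cardsE; apply/esym/card_uniqP.
apply: leq_bigmax_cond; rewrite powersetE; apply/andP; split.
  by apply/subsetP => X; rewrite inE => /(allP sA).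
have s_sub : sorted (fun X Y : {set 'I_n} => X \subset Y) s.
  by apply: sub_sorted s_sorted => X Y /proper_sub.
apply/forall_inP => X; rewrite inE => Xs; apply/forall_inP => Y; rewrite inE => Ys.
have le_sub := sorted_leq_index (fun Y X Z : {set 'I_n} => @subset_trans _ X Y Z)
  (fun X : {set 'I_n} => subxx X) s_sub.
have [XY|/ltnW YX] := leqP (index X s) (index Y s).
  by rewrite (le_sub X Y).
by rewrite (le_sub Y X) ?orbT.
Qed.

Lemma setT_in_union_closed : union_closed A -> base_is_n A -> setT \in A.
Proof.
move=> [[X XA X_neq0] closedA] <-.
have: (bset A == set0) || (bset A \in A).
  rewrite /bset; apply: (big_ind (fun Y => (Y == set0) || (Y \in A))) => [|Y Z|Y ->];
    rewrite ?eqxx ?orbT //.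
  move=> /orP[/eqP->|YA]; first by rewrite set0U.
  by move=> /orP[/eqP->|ZA]; rewrite ?setU0 ?YA ?closedA ?orbT.
case/orP=> // /eqP bA0; move: X_neq0; rewrite -subset0 -bA0.
by rewrite /bset (bigcup_sup X XA).
Qed.

Hypothesis closedA : forall X Y, X \in A -> Y \in A -> X :|: Y \in A.

Lemma cover_or_between X1 X2 T : X1 \in A -> X2 \in A -> X1 != X2 ->
  X1 :|: X2 \subset T ->
  T \subset X1 :|: X2 \/
  exists2 X, X \in [:: X1; X2] &
    exists2 V, V \in A & X \proper V /\ V \proper T.
Proof.
move=> X1A X2A X12 sub12.
have [|notcover] := boolP (T \subset X1 :|: X2); [by left | right].
have UT : X1 :|: X2 \proper T by rewrite properE sub12 notcover.
have UA : X1 :|: X2 \in A by apply: closedA.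
by case/orP: (neq_properU X12) => ?; [exists X1 | exists X2];
  rewrite ?inE ?eqxx ?orbT //; exists (X1 :|: X2).
Qed.

Hypothesis separatingA : separating A.

Lemma separating_step V x z : V \in A -> x != z -> x \notin V -> z \notin V ->
  exists2 W, W \in A & V \proper W /\ (x \in W) != (z \in W).
Proof.
move=> VA xz xV zV; have [X XA sepX] := separatingA xz.
exists (V :|: X); first exact: closedA.
rewrite !inE (negbTE xV) (negbTE zV) /=; split => //.
rewrite properE subsetUl /=; apply: contra sepX => /subsetP XV.
have notX y : y \notin V -> y \notin X by apply: contra => yX; apply: XV; rewrite inE yX orbT.
by rewrite (negbTE (notX x xV)) (negbTE (notX z zV)).
Qed.

Lemma separating_step_setT V : V \in A -> 1 < #|~: V| ->
  exists2 W, W \in A & V \proper W /\ W \proper setT.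
Proof.
move=> VA /card_gt1P [x [z [+ + xz]]]; rewrite !inE => xV zV.
have [W WA [VW sepW]] := separating_step VA xz xV zV.
exists W => //; split => //; rewrite properT; apply: contra sepW => /eqP->.
by rewrite !inE.
Qed.

End Families.

Definition min_small_cover n (A S : {set {set 'I_n}}) : Prop :=
  [/\ S \subset small A, bset S = bset (small A) &
      forall S' : {set {set 'I_n}}, S' \subset small A -> bset S' = bset (small A) ->
        #|S| <= #|S'|].

Lemma exists_min_small_cover n (A : {set {set 'I_n}}) :
  exists2 S, is_calB A S & min_small_cover A S.
Proof.
pose cover (S : {set {set 'I_n}}) := (S \subset small A) && (bset S == bset (small A)).
have cover_small : cover (small A) by rewrite /cover subxx eqxx.
have [S /andP[S_sub /eqP coverS] minS] :=
  arg_minnP (fun S : {set {set 'I_n}} => #|S|) cover_small.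
have minS' (S' : {set {set 'I_n}}) :
    S' \subset small A -> bset S' = bset (small A) -> #|S| <= #|S'|.
  by move=> S'_sub coverS'; apply: minS; rewrite /cover S'_sub coverS' eqxx.
exists S; last by split.
split => // [|S' S'_sub _]; last exact: minS'.
apply/forall_inP => X XS; apply: contraTneq isT => /eqP irr0.
have: #|S| <= #|S :\ X|.
  apply: minS'; first exact: subset_trans (subD1set S X) S_sub.
  rewrite -coverS [in RHS]/bset (big_setD1 X XS) /=; apply/esym/setUidPr.
  by rewrite -setD_eq0.
by rewrite (cardsD1 X S) XS ltnn.
Qed.

Lemma nested_small_arith (n y c : nat) (xc xd xe xr : int) :
  4 <= n -> 0 < y -> 2 * y < n -> n <= c + y + 1 ->
  xc = (c%:Z * ((2 * n.-1)%:Z - n%:Z))%R ->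
  (y%:Z * ((2 * y)%:Z - n%:Z) - (2 * y)%:Z <= xd)%R -> (- c%:Z <= xe)%R -> (0 <= xr)%R ->
  (0 <= xc + ((2 * n)%:Z - n%:Z + ((2 * y)%:Z - n%:Z + xd + (xe + xr))))%R.
Proof.
move=> n_ge4 y_gt0 smallY cover -> xdE xeE xr_ge0.
have : ((n - y - 1)%:Z * (n%:Z - 3) <= c%:Z * (n%:Z - 3))%R by apply: ler_wpM2r; lia.
have : (y%:Z * (n%:Z - 2 * y%:Z) <= (n - y - 1)%:Z * (n%:Z - 3))%R by nia.
lia.
Qed.

Lemma two_halves_arith (n h b : nat) (xq xm xr : int) :
  2 * h + 1 = n -> 4 <= n ->
  ((b * (2 * h))%:Z - (3 * h)%:Z <= xq)%R -> (- (2 * (b * h))%:Z <= xm)%R -> (0 <= xr)%R ->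
  (0 <= xq + ((2 * h)%:Z - n%:Z + ((2 * h)%:Z - n%:Z + xm) +
         ((2 * n)%:Z - n%:Z + ((2 * (2 * h))%:Z - n%:Z + xr))))%R.
Proof. lia. Qed.

Section HeightFour.
Variables (n : nat) (A : {set {set 'I_n}}).
Implicit Types X T V W Y Z : {set 'I_n}.
Hypotheses (closedA : forall X Y, X \in A -> Y \in A -> X :|: Y \in A)
  (separatingA : separating A) (setT_A : setT \in A) (heightA : height A <= 4).

Lemma no_chain5 X1 X2 X3 X4 X5 :
  X1 \in A -> X2 \in A -> X3 \in A -> X4 \in A -> X5 \in A ->
  X1 \proper X2 -> X2 \proper X3 -> X3 \proper X4 -> X4 \proper X5 -> False.
Proof.
move=> X1A X2A X3A X4A X5A p12 p23 p34 p45; have: 5 <= height A.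
  by apply: (@sorted_chain_le_height _ _ [:: X1; X2; X3; X4; X5]);
    rewrite /= ?X1A ?X2A ?X3A ?X4A ?X5A ?p12 ?p23 ?p34 ?p45.
by rewrite leqNgt ltnS heightA.
Qed.

Lemma cover_below X0 X1 X2 T : X1 \in A -> X2 \in A -> T \in A -> X1 != X2 ->
  X0 \in A -> X0 \proper X1 -> X0 \proper X2 -> X1 :|: X2 \subset T -> T \proper setT ->
  T \subset X1 :|: X2.
Proof.
move=> X1A X2A TA X12 X0A X01 X02 sub12 TT.
case: (cover_or_between closedA X1A X2A X12 sub12) => // -[X]; rewrite !inE.
case/orP=> /eqP-> [V VA [XV VT]].
  by case: (no_chain5 X0A X1A VA TA setT_A X01 XV VT TT).
by case: (no_chain5 X0A X2A VA TA setT_A X02 XV VT TT).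
Qed.

Lemma cover_above X1 X2 T W : X1 \in A -> X2 \in A -> T \in A -> X1 != X2 ->
  W \in A -> T \proper W -> W \proper setT -> X1 :|: X2 \subset T ->
  T \subset X1 :|: X2.
Proof.
move=> X1A X2A TA X12 WA TW WT sub12.
case: (cover_or_between closedA X1A X2A X12 sub12) => // -[X XA [V VA [XV VT]]].
have {}XA : X \in A by move: XA; rewrite !inE => /orP[] /eqP->.
by case: (no_chain5 XA VA TA WA setT_A XV VT TW WT).
Qed.

Lemma cosize_le1 X0 Y V : X0 \in A -> Y \in A -> V \in A ->
  X0 \proper Y -> Y \proper V -> #|~: V| <= 1.
Proof.
move=> X0A YA VA X0Y YV; rewrite leqNgt; apply/negP.
move=> /(separating_step_setT closedA separatingA VA).
by case=> W WA [VW WT]; apply: (no_chain5 X0A YA VA WA setT_A X0Y YV VW WT).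
Qed.

Definition cosingletons := A :&: [set X | #|~: X| == 1].

Section NestedSmall.
Variables (Y X0 : {set 'I_n}).
Hypotheses (YA : Y \in A) (X0A : X0 \in A) (X0Y : X0 \proper Y)
  (smallY : 2 * #|Y| < n) (n_ge4 : 4 <= n).

Lemma between_Y_setT : exists2 W, W \in A & Y \proper W /\ W \proper setT.
Proof.
apply: (separating_step_setT closedA separatingA YA).
by have := card_compl Y; lia.
Qed.

Lemma subsets_Y_cover X1 X2 : X1 \in A -> X2 \in A -> X1 \subset Y -> X2 \subset Y ->
  X1 != X2 -> Y \subset X1 :|: X2.
Proof.
move=> X1A X2A X1Y X2Y X12; have [W WA [YW WT]] := between_Y_setT.
by apply: (cover_above X1A X2A YA X12 WA YW WT); rewrite subUset X1Y X2Y.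
Qed.

Lemma card_cosingletons : n <= #|cosingletons| + #|Y| + 1.
Proof.
pose T' := [set x | ~: [set x] \in A].
have few_missing : #|~: Y :\: T'| <= 1.
  apply/card_le1_eqP => a b; rewrite !inE => /andP[aT' aY] /andP[bT' bY].
  apply/eqP; rewrite eq_sym; apply/negPn/negP => ab.
  have [W WA [YW sepW]] := separating_step closedA separatingA YA ab aY bY.
  have W_cosmall := cosize_le1 X0A YA WA X0Y YW.
  have [aW|aW] := boolP (a \in W).
    have bW : b \notin W by move: sepW; rewrite aW; case: (b \in W).
    by move: bT'; rewrite -(cosingleton_eq W_cosmall bW) WA.
  by move: aT'; rewrite -(cosingleton_eq W_cosmall aW) WA.
have T'_le : #|T'| <= #|cosingletons|.
  have cosingleton_inj : injective (fun x : 'I_n => ~: [set x]).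
    by move=> x y /setC_inj /set1_inj.
  rewrite -(card_imset _ cosingleton_inj).
  apply: subset_leq_card; apply/subsetP => _ /imsetP[x + ->]; rewrite !inE => ->.
  by rewrite setCK cards1.
have := cardsID T' (~: Y); have := card_compl Y.
have := subset_leq_card (subsetIr (~: Y) T'); lia.
Qed.

Lemma small_outside_Y Z : Z \in A -> 2 * #|Z| < n -> ~~ (Z \subset Y) ->
  [/\ 2 * #|Z| + 1 = n, [disjoint Z & Y] & Z :|: Y \in cosingletons].
Proof.
move=> ZA smallZ ZY; have ZYA : Z :|: Y \in A by apply: closedA.
have YZY : Y \proper Z :|: Y by rewrite properE subsetUr subUset subxx andbT.
have cosmall := cosize_le1 X0A YA ZYA X0Y YZY; have cardC := card_compl (Z :|: Y).
have cardU := cardsUI Z Y.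
have [half /eqP disj /eqP co1] :
    [/\ 2 * #|Z| + 1 = n, #|Z :&: Y| = 0 & #|~: (Z :|: Y)| = 1].
  by clear -cosmall cardC cardU smallY smallZ; split; lia.
by rewrite -setI_eq0 -cards_eq0 !inE ZYA disj co1.
Qed.

Lemma card_small_outside_le (F : {set {set 'I_n}}) :
  (forall Z, Z \in F -> [/\ Z \in A, 2 * #|Z| < n & ~~ (Z \subset Y)]) ->
  #|F| <= #|cosingletons|.
Proof.
move=> smallF.
have facts Z : Z \in F -> [/\ 2 * #|Z| + 1 = n, [disjoint Z & Y] & Z :|: Y \in cosingletons].
  by case/smallF => ZA smallZ ZY; apply: small_outside_Y.
rewrite -(card_in_imset (f := fun Z => Z :|: Y)); last first.
  move=> Z1 Z2 /facts[_ dis1 _] /facts[_ dis2 _] /(congr1 (fun S => S :\: Y)).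
  by rewrite !setDUl setDv !setU0 (setDidPl dis1) (setDidPl dis2).
by apply/subset_leq_card/subsetP => _ /imsetP[Z /facts[_ _ ZYC] ->].
Qed.

Lemma excess_proper_subsets_lower (D : {set {set 'I_n}}) :
  (forall X, X \in D -> X \in A /\ X \proper Y) ->
  (#|Y|%:Z * ((2 * #|Y|)%:Z - n%:Z) - (2 * #|Y|)%:Z <= excess D)%R.
Proof.
move=> subD; have subY X : X \in D -> X \subset Y by case/subD=> _ /proper_sub.
have D_excess := excess_sub subY.
have D_missing : \sum_(X in D) #|Y :\: X| <= #|Y|.
  apply: missing_le_card => X1 X2 /subD[X1A /proper_sub X1Y] /subD[X2A /proper_sub X2Y].
  exact: subsets_Y_cover.
have D_card : #|D| <= \sum_(X in D) #|Y :\: X|.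
  by apply: card_le_missing => X /subD[_]; rewrite properE => /andP[].
have : (#|D|%:Z * (n%:Z - (2 * #|Y|)%:Z) <= #|Y|%:Z * (n%:Z - (2 * #|Y|)%:Z))%R.
  by apply: ler_wpM2r; lia.
lia.
Qed.

Lemma excess_small_outside_lower (E : {set {set 'I_n}}) :
  (forall Z, Z \in E -> [/\ Z \in A, 2 * #|Z| < n & ~~ (Z \subset Y)]) ->
  (- #|cosingletons|%:Z <= excess E)%R.
Proof.
move=> smallE; have := card_small_outside_le smallE.
have : (- #|E|%:Z <= excess E)%R.
  rewrite -sum1_card; apply: excess_lower => Z /smallE[ZA smallZ ZY].
  by have [-> _ _] := small_outside_Y ZA smallZ ZY.
lia.
Qed.

Lemma excess_nested_small : (0 <= excess A)%R.
Proof.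
have coY : 1 < #|~: Y| by have := card_compl Y; lia.
have TA' : setT \in A :\: [set X | #|~: X| == 1] by rewrite !inE setT_A setCT cards0.
set A1 := A :\: [set X | #|~: X| == 1] :\ setT.
have YA1 : Y \in A1 :&: [set X : {set 'I_n} | X \subset Y].
  rewrite !inE YA subxx (gtn_eqF coY) !andbT.
  by apply: contraTneq coY => ->; rewrite setCT cards0.
rewrite (excess_setID A [set X | #|~: X| == 1]) -/cosingletons (excess_setD1 TA').
rewrite (excess_setID A1 [set X : {set 'I_n} | X \subset Y]) (excess_setD1 YA1).
rewrite (excess_setID (A1 :\: _) [set X : {set 'I_n} | 2 * #|X| < n]).
have cosingletonsE :
    excess cosingletons = (#|cosingletons|%:Z * ((2 * n.-1)%:Z - n%:Z))%R.
  apply: excess_card_const => X; rewrite !inE => /andP[_ /eqP coX].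
  by have := card_compl X; lia.
have D_excess :=
  @excess_proper_subsets_lower (A1 :&: [set X : {set 'I_n} | X \subset Y] :\ Y).
have E_excess := @excess_small_outside_lower
  ((A1 :\: [set X : {set 'I_n} | X \subset Y]) :&: [set X : {set 'I_n} | 2 * #|X| < n]).
have y_gt0 : 0 < #|Y| := leq_ltn_trans (leq0n _) (proper_card X0Y).
rewrite cardsT card_ord.
apply: (nested_small_arith n_ge4 y_gt0 smallY card_cosingletons cosingletonsE).
- apply: D_excess => X; rewrite !inE => /and3P[XY /and3P[_ _ XA] XsubY].
  by rewrite XA properEneq XY XsubY.
- apply: E_excess => Z; rewrite !inE.
  by move=> /andP[/andP[ZY /and3P[_ _ ZA]] smallZ]; split.
- by apply: excess_ge0 => X; rewrite !inE -leqNgt => /andP[].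
Qed.

End NestedSmall.

Lemma excess_one_small : {in small A &, forall Z1 Z2, Z1 = Z2} ->
  (0 <= excess A)%R.
Proof.
move=> small_eq; rewrite excess_small.
rewrite (excess_setD1 (setT_nonsmall setT_A)) cardsT card_ord.
have small_card : #|small A| <= 1.
  by apply/card_le1_eqP => Z1 Z2 Z1small Z2small; rewrite (small_eq Z1 Z2).
have small_excess : (- (#|small A| * n)%:Z <= excess (small A))%R.
  by rewrite -sum_nat_const; apply: excess_lower => X _; apply: leq_addl.
set R := A :\: small A :\ setT.
have : (0 <= excess R)%R := excess_nonsmall_ge0 (subD1set _ _).
nia.
Qed.

Lemma excess_pair_cover U : U \in A -> U != setT -> n <= 2 * #|U| ->
  (forall Z, Z \in small A -> Z \subset U) ->
  {in small A &, forall Z1 Z2, Z1 != Z2 -> U \subset Z1 :|: Z2} ->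
  (0 <= excess A)%R.
Proof.
move=> UA UT largeU small_subU small_cover; rewrite excess_small.
have UA' : U \in A :\: small A :\ setT by rewrite !inE UT UA andbT -leqNgt.
rewrite (excess_setD1 (setT_nonsmall setT_A)) (excess_setD1 UA') cardsT card_ord.
have small_excess := excess_sub small_subU.
have small_missing : \sum_(X in small A) #|U :\: X| <= #|U|.
  exact: missing_le_card small_cover.
set R := A :\: small A :\ setT :\ U.
have : (0 <= excess R)%R.
  exact: excess_nonsmall_ge0 (subset_trans (subD1set _ _) (subD1set _ _)).
have : (0 <= #|small A|%:Z * ((2 * #|U|)%:Z - n%:Z))%R by apply: mulr_ge0; lia.
lia.
Qed.

Definition between X T := A :&: [set V : {set 'I_n} | (X \proper V) && (V \proper T)].

Section Unnested.
Hypothesis unnested : forall Z X, Z \in small A -> X \in A -> ~~ (X \proper Z).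

Lemma small_not_subset Z S : Z \in small A -> S \in small A -> Z != S -> ~~ (Z \subset S).
Proof.
move=> Zsmall Ssmall ZS.
by apply: contra (unnested Ssmall (small_mem Zsmall)) => ZsubS; rewrite properEneq ZS.
Qed.

Section TwoHalves.
Variables S1 S2 : {set 'I_n}.
Hypotheses (S1A : S1 \in A) (S2A : S2 \in A) (disjS : [disjoint S1 & S2])
  (halfS1 : 2 * #|S1| + 1 = n) (halfS2 : 2 * #|S2| + 1 = n) (n_ge4 : 4 <= n)
  (small_subU : forall Z, Z \in small A -> Z \subset S1 :|: S2).

Definition mixed Z := [&& Z \in small A, Z != S1 & Z != S2].

Lemma S1_lt : 2 * #|S1| < n. Proof. lia. Qed.
Lemma S2_lt : 2 * #|S2| < n. Proof. lia. Qed.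
Lemma S1_small : S1 \in small A. Proof. by rewrite inE S1A S1_lt. Qed.
Lemma S2_small : S2 \in small A. Proof. by rewrite inE S2A S2_lt. Qed.

Lemma card_halvesU : #|S1 :|: S2| = 2 * #|S1|.
Proof. by rewrite cardsU (disjoint_setI0 disjS) cards0 subn0; lia. Qed.

Lemma card_halves : #|S2| = #|S1|. Proof. lia. Qed.

Lemma halvesU_proper_setT : S1 :|: S2 \proper setT.
Proof.
by rewrite properT; apply/negP => /eqP UT; move: card_halvesU; rewrite UT cardsT card_ord; lia.
Qed.

Lemma halvesU_nonsmall : ~~ (2 * #|S1 :|: S2| < n).
Proof. by rewrite card_halvesU; lia. Qed.

Lemma mixed_setU_between Z : mixed Z -> Z :|: S1 \in between S1 (S1 :|: S2).
Proof.
case/and3P=> Zsmall ZS1 ZS2.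
rewrite !inE closedA ?(small_mem Zsmall) //= properE subsetUr subUset subxx andbT.
rewrite (small_not_subset Zsmall S1_small ZS1) properE subUset small_subU //= subsetUl /=.
have S2Z : S2 != Z by rewrite eq_sym.
apply: contra (small_not_subset S2_small Zsmall S2Z).
move=> /(subset_trans (subsetUr S1 S2)) /subset_setU_disjoint; apply.
by rewrite disjoint_sym.
Qed.

Lemma between_cover Q1 Q2 : Q1 \in between S1 (S1 :|: S2) -> Q2 \in between S1 (S1 :|: S2) ->
  Q1 != Q2 -> S2 \subset Q1 :|: Q2.
Proof.
rewrite !inE => /and3P[Q1A S1Q1 Q1U] /and3P[Q2A S1Q2 Q2U] Q12.
have QU : Q1 :|: Q2 \subset S1 :|: S2 by rewrite subUset (proper_sub Q1U) (proper_sub Q2U).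
apply: subset_trans (subsetUr S1 S2) _.
exact: cover_below Q1A Q2A (closedA S1A S2A) Q12 S1A S1Q1 S1Q2 QU halvesU_proper_setT.
Qed.

Lemma mixed_cover Z1 Z2 : mixed Z1 -> mixed Z2 -> Z1 != Z2 -> Z1 :|: S1 = Z2 :|: S1 ->
  S1 \subset Z1 :|: Z2.
Proof.
move=> /and3P[Z1small Z1S1 Z1S2] /and3P[Z2small Z2S1 Z2S2] Z12 Z1S1_eq.
have S2Z Z : Z \in small A -> Z != S2 -> S2 \proper Z :|: S2.
  move=> Zsmall ZS2; rewrite properE subsetUr subUset subxx andbT.
  exact: small_not_subset Zsmall S2_small ZS2.
have inA Z : Z \in small A -> Z :|: S2 \in A by move=> /small_mem ZA; apply: closedA.
have sub Z : Z \in small A -> Z :|: S2 \subset S1 :|: S2.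
  by move=> /small_subU ZU; rewrite subUset ZU subsetUr.
have Z1S2_neq : Z1 :|: S2 != Z2 :|: S2.
  apply: contra Z12 => /eqP Z1S2_eq; apply/eqP.
  by rewrite -[Z1](setU0 Z1) -[Z2](setU0 Z2) -(disjoint_setI0 disjS) !setUIr Z1S1_eq Z1S2_eq.
have sub12 : Z1 :|: S2 :|: (Z2 :|: S2) \subset S1 :|: S2 by rewrite subUset !sub.
have cover := cover_below (inA _ Z1small) (inA _ Z2small) (closedA S1A S2A) Z1S2_neq S2A
  (S2Z _ Z1small Z1S2) (S2Z _ Z2small Z2S2) sub12 halvesU_proper_setT.
apply: (@subset_setU_disjoint _ _ _ S2) _ disjS.
by rewrite setUACA setUid in cover; apply: subset_trans (subsetUl S1 S2) cover.
Qed.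

Lemma mixed_lower Z : mixed Z -> n <= 2 * #|Z| + 2 * #|S1 :\: Z|.
Proof.
move=> /mixed_setU_between; rewrite !inE => /and3P[_ /proper_card S1ZS1 _].
have cardU : #|Z :|: S1| + #|Z :&: S1| = #|Z| + #|S1| := cardsUI Z S1.
have cardD : #|Z :&: S1| + #|S1 :\: Z| = #|S1| by rewrite setIC cardsID.
lia.
Qed.

Lemma mixed_missing (M : {set {set 'I_n}}) : (forall Z, Z \in M -> mixed Z) ->
  \sum_(Z in M) #|S1 :\: Z| <= #|between S1 (S1 :|: S2)| * #|S1|.
Proof.
move=> mixedM; rewrite (partition_big (fun Z => Z :|: S1) (mem (between S1 (S1 :|: S2)))) /=;
  last by move=> Z /mixedM /mixed_setU_between.
rewrite -sum_nat_const; apply: leq_sum => Q _.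
apply: missing_le_card => Z1 Z2 /andP[/mixedM Z1m /eqP Z1Q] /andP[/mixedM Z2m /eqP Z2Q] Z12.
by apply: mixed_cover; rewrite ?Z1Q ?Z2Q.
Qed.

Lemma excess_between_lower :
  ((#|between S1 (S1 :|: S2)| * (2 * #|S1|))%:Z - (3 * #|S1|)%:Z
     <= excess (between S1 (S1 :|: S2)))%R.
Proof.
set Q := between S1 (S1 :|: S2).
have Q_facts X : X \in Q -> S1 \subset X /\ X \proper S1 :|: S2.
  by rewrite !inE => /and3P[_ /proper_sub].
have Q_excess : (excess Q + (2 * \sum_(X in Q) #|(S1 :|: S2) :\: X|)%:Z =
    #|Q|%:Z * ((2 * #|S1 :|: S2|)%:Z - n%:Z))%R.
  by apply: excess_sub => X /Q_facts[_ /proper_sub].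
have Q_missing : \sum_(X in Q) #|(S1 :|: S2) :\: X| <= #|S2|.
  have -> : \sum_(X in Q) #|(S1 :|: S2) :\: X| = \sum_(X in Q) #|S2 :\: X|.
    apply: eq_bigr => X /Q_facts[S1X _].
    by rewrite setDUl (_ : S1 :\: X = set0) ?set0U //; apply/eqP; rewrite setD_eq0.
  by apply: missing_le_card => X1 X2; apply: between_cover.
have Q_card : #|Q| <= \sum_(X in Q) #|(S1 :|: S2) :\: X|.
  by apply: card_le_missing => X /Q_facts[_]; rewrite properE => /andP[].
move: Q_excess; rewrite card_halvesU; nia.
Qed.

Lemma excess_mixed_lower (M : {set {set 'I_n}}) : (forall Z, Z \in M -> mixed Z) ->
  (- (2 * (#|between S1 (S1 :|: S2)| * #|S1|))%:Z <= excess M)%R.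
Proof.
move=> mixedM; have := mixed_missing mixedM.
have : (- (2 * \sum_(Z in M) #|S1 :\: Z|)%:Z <= excess M)%R.
  by rewrite big_distrr; apply: excess_lower => Z /mixedM /mixed_lower.
lia.
Qed.

Lemma excess_two_halves : (0 <= excess A)%R.
Proof.
have S1S2 : S1 != S2.
  apply: contraTneq disjS => <-; rewrite -setI_eq0 setIid -cards_eq0; lia.
have S1_notproper : ~~ (S1 \proper S2).
  by apply: contra (small_not_subset S1_small S2_small S1S2); apply: proper_sub.
have U_neqT : S1 :|: S2 != setT by rewrite -properT halvesU_proper_setT.
rewrite (excess_setID A [set V : {set 'I_n} | (S1 \proper V) && (V \proper S1 :|: S2)]).
rewrite -/(between S1 (S1 :|: S2)); set A2 := A :\: _; rewrite (excess_small A2).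
have S1in : S1 \in small A2 by rewrite !inE properxx S1A S1_lt.
have S2in : S2 \in small A2 :\ S1 by rewrite !inE eq_sym S1S2 (negbTE S1_notproper) S2A S2_lt.
have TA2 : setT \in A2.
  by rewrite !inE setT_A andbT (_ : setT \proper _ = false) ?andbF // properE subsetT andbF.
have Uin : S1 :|: S2 \in A2 :\: small A2 :\ setT.
  by rewrite !inE U_neqT properxx andbF closedA // (negbTE halvesU_nonsmall).
rewrite (excess_setD1 S1in) (excess_setD1 S2in).
rewrite (excess_setD1 (setT_nonsmall TA2)) (excess_setD1 Uin).
have M_mixed Z : Z \in small A2 :\ S1 :\ S2 -> mixed Z.
  by rewrite !inE /mixed => /and4P[-> -> /andP[_ ZA] Zsmall]; rewrite inE ZA Zsmall.
rewrite cardsT card_ord card_halvesU card_halves.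
apply: two_halves_arith halfS1 n_ge4 excess_between_lower (excess_mixed_lower M_mixed) _.
exact: excess_nonsmall_ge0 (subset_trans (subD1set _ _) (subD1set _ _)).
Qed.

End TwoHalves.

Lemma small_sub_eq Z S : Z \in small A -> S \in small A -> Z \subset S -> Z = S.
Proof. by move=> Zsmall Ssmall; apply: contraTeq => /(small_not_subset Zsmall Ssmall). Qed.

Lemma excess_two_small_cover S1 S2 : S1 \in small A -> S2 \in small A -> 4 <= n ->
  (forall Z, Z \in small A -> Z \subset S1 :|: S2) -> n <= 2 * #|S1 :|: S2| ->
  (0 <= excess A)%R.
Proof.
move=> S1small S2small n_ge4 small_subU largeU.
move: (S1small) (S2small); rewrite !inE => /andP[S1A S1_lt] /andP[S2A S2_lt].
have UA : S1 :|: S2 \in A by apply: closedA.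
have cardU : #|S1 :|: S2| + #|S1 :&: S2| = #|S1| + #|S2| := cardsUI S1 S2.
have cardC := card_compl (S1 :|: S2).
have [coU|coU] := ltnP 1 #|~: (S1 :|: S2)|.
  have [W WA [UW WT]] := separating_step_setT closedA separatingA UA coU.
  apply: (excess_pair_cover UA _ largeU small_subU).
  - by rewrite -properT; apply: proper_trans UW WT.
  - move=> Z1 Z2 Z1small Z2small Z12.
    apply: (cover_above (small_mem Z1small) (small_mem Z2small) UA Z12 WA UW WT).
    by rewrite subUset !small_subU.
have disjS : [disjoint S1 & S2] by rewrite -setI_eq0 -cards_eq0; lia.
by apply: (excess_two_halves S1A S2A disjS) => //; lia.
Qed.

Lemma excess_min_small_cover (S : {set {set 'I_n}}) :
  min_small_cover A S -> #|S| <= 2 -> 4 <= n -> (0 <= excess A)%R.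
Proof.
move=> [S_sub coverS minS] S_le2 n_ge4.
have small_sub Z : Z \in small A -> Z \subset bset S.
  by rewrite coverS => Zsmall; apply: bigcup_sup.
have S_small X : X \in S -> X \in small A := subsetP S_sub X.
have [S_gt1|S_le1] := ltnP 1 #|S|.
  have /cards2P[S1 [S2 [S12 S_eq]]] : #|S| == 2 by rewrite eqn_leq S_le2 S_gt1.
  have S1S : S1 \in S by rewrite S_eq !inE eqxx.
  have S2S : S2 \in S by rewrite S_eq !inE eqxx orbT.
  have bsetS : bset S = S1 :|: S2 by rewrite S_eq /bset big_setU1 ?inE // big_set1.
  apply: (excess_two_small_cover (S_small S1 S1S) (S_small S2 S2S) n_ge4).
    by move=> Z /small_sub; rewrite bsetS.
  rewrite leqNgt; apply: contraTN S_gt1 => Usmall; rewrite -leqNgt.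
  have S1A := small_mem (S_small S1 S1S); have S2A := small_mem (S_small S2 S2S).
  rewrite -(cards1 (S1 :|: S2)); apply: minS; first by rewrite sub1set inE closedA.
  by rewrite -coverS bsetS /bset big_set1.
apply: excess_one_small => Z1 Z2 Z1small Z2small.
have [S0|[S1 S1S]] := set_0Vmem S.
  move: (small_sub Z1 Z1small) (small_sub Z2 Z2small).
  by rewrite S0 /bset big_set0 !subset0 => /eqP-> /eqP->.
have bsetS : bset S \subset S1.
  by apply/bigcupsP => X XS; rewrite (card_le1_eqP S_le1 X S1 XS S1S).
have eqS1 Z : Z \in small A -> Z = S1.
  move=> Zsmall; apply: (small_sub_eq Zsmall (S_small S1 S1S)).
  exact: subset_trans (small_sub Z Zsmall) bsetS.
by rewrite (eqS1 Z1 Z1small) (eqS1 Z2 Z2small).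
Qed.

End Unnested.

End HeightFour.

Theorem corollary2p2 (n : nat) (A : {set {set 'I_n}}) :
  union_closed A -> base_is_n A -> separating A ->
  height A = 4 -> 4 <= n ->
  (forall S, is_calB A S -> #|S| <= 2) ->
  exists x : 'I_n, #|A| <= 2 * #|[set X in A | x \in X]|.
Proof.
move=> ucA baseA sepA heightA n_ge4 calB_le2.
have [_ closedA] := ucA; have setT_A := setT_in_union_closed ucA baseA.
have height_le4 : height A <= 4 by rewrite heightA.
apply: excess_ge0_frequent; first by apply: leq_trans n_ge4.
have [/exists_inP[Y] |] := boolP [exists Y in small A, exists X0 in A, X0 \proper Y].
  rewrite inE => /andP[YA smallY] /exists_inP[X0 X0A X0Y].
  exact: (excess_nested_small closedA sepA setT_A height_le4 YA X0A X0Y smallY n_ge4).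
rewrite negb_exists_in => /forall_inP unnested.
have [S calB minS] := exists_min_small_cover A.
apply: (excess_min_small_cover closedA sepA setT_A height_le4 _ minS (calB_le2 S calB) n_ge4).
by move=> Z X Zsmall XA; move: (unnested Z Zsmall); rewrite negb_exists_in => /forall_inP/(_ X XA).
Qed.
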